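(* Let $X$ be a real Hilbert space, let $\mu\ge\omega\ge0$ and $\beta>0$. Let $f\colon X\to\mathbb{R}$ be $\mu$-strongly convex and Fréchet differentiable with $\beta$-Lipschitz continuous gradient, and let $g\colon X\to\left]-\infty,+\infty\right]$ be proper, lower semicontinuous and $\omega$-hypoconvex. Suppose $\operatorname{argmin}(f+g)\neq\varnothing$. Let $\gamma\in\left]0,\frac2{\beta+2\mu}\right[$, set $\delta=\frac{1-\gamma\mu}{1-\gamma\omega}$ and $T=\operatorname{prox}_{\gamma g}(\mathrm{Id}-\gamma\nabla f)$, and let $x_0\in X$. Then $\operatorname{Fix}T=\operatorname{argmin}(f+g)$ and there exists $\bar x\in\operatorname{argmin}(f+g)$ with $T^nx_0\rightharpoonup\bar x$. If moreover $\mu>\omega$, then $\operatorname{argmin}(f+g)=\{\bar x\}$ and $T^nx_0\to\bar x$ with linear rate $\delta<1$.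
   Context: $g$ is $\omega$-hypoconvex if $g+\tfrac\omega2\|\cdot\|^2$ is convex. For $\gamma>0$ with $\gamma\omega<1$, $\operatorname{prox}_{\gamma g}(x)=\operatorname{argmin}_{y\in X}\big(g(y)+\tfrac1{2\gamma}\|x-y\|^2\big)$, which is single-valued with full domain. $f$ is $\mu$-strongly convex if $f-\tfrac\mu2\|\cdot\|^2$ is convex. *)

From Stdlib Require Import Reals Lra ClassicalEpsilon.
Open Scope R_scope.

Record Hilbert := {
  hcar :> Type;
  hzero : hcar;
  hadd : hcar -> hcar -> hcar;
  hopp : hcar -> hcar;
  hscal : R -> hcar -> hcar;
  hinner : hcar -> hcar -> R;
  hadd_assoc : forall x y z, hadd x (hadd y z) = hadd (hadd x y) z;
  hadd_comm : forall x y, hadd x y = hadd y x;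
  hadd_zero : forall x, hadd x hzero = x;
  hadd_opp : forall x, hadd x (hopp x) = hzero;
  hscal_one : forall x, hscal 1 x = x;
  hscal_assoc : forall a b x, hscal a (hscal b x) = hscal (a * b) x;
  hscal_distr_l : forall a x y, hscal a (hadd x y) = hadd (hscal a x) (hscal a y);
  hscal_distr_r : forall a b x, hscal (a + b) x = hadd (hscal a x) (hscal b x);
  hinner_sym : forall x y, hinner x y = hinner y x;
  hinner_add_l : forall x y z, hinner (hadd x y) z = hinner x z + hinner y z;
  hinner_scal_l : forall a x y, hinner (hscal a x) y = a * hinner x y;
  hinner_pos : forall x, 0 <= hinner x x;
  hinner_def : forall x, hinner x x = 0 -> x = hzero;
  hcomplete : forall u : nat -> hcar,
    (forall eps, 0 < eps -> exists N, forall m n, (N <= m)%nat -> (N <= n)%nat ->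
        sqrt (hinner (hadd (u m) (hopp (u n))) (hadd (u m) (hopp (u n)))) < eps) ->
    exists l, forall eps, 0 < eps -> exists N, forall n, (N <= n)%nat ->
        sqrt (hinner (hadd (u n) (hopp l)) (hadd (u n) (hopp l))) < eps
}.

Arguments hzero {h}.
Arguments hadd {h}.
Arguments hopp {h}.
Arguments hscal {h}.
Arguments hinner {h}.

Definition hsub {X : Hilbert} (x y : X) : X := hadd x (hopp y).
Definition hnorm {X : Hilbert} (x : X) : R := sqrt (hinner x x).

Inductive ERext := Fin (r : R) | Pinfty.

Definition eplus (a : ERext) (c : R) : ERext :=
  match a with Fin r => Fin (r + c) | Pinfty => Pinfty end.
Definition ele (a b : ERext) : Prop :=
  match a, b with
  | _, Pinfty => True
  | Fin x, Fin y => x <= y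
  | Pinfty, Fin _ => False
  end.
Definition elt (a b : ERext) : Prop :=
  match a, b with
  | Fin x, Pinfty => True
  | Fin x, Fin y => x < y
  | Pinfty, _ => False
  end.

Definition in_dom {X : Hilbert} (g : X -> ERext) (x : X) : Prop :=
  exists r, g x = Fin r.

Definition proper_fun {X : Hilbert} (g : X -> ERext) : Prop :=
  exists x, in_dom g x.

Definition lsc {X : Hilbert} (g : X -> ERext) : Prop :=
  forall x c, elt (Fin c) (g x) ->
    exists eps, 0 < eps /\ forall y, hnorm (hsub y x) < eps -> elt (Fin c) (g y).

Definition convex_ext {X : Hilbert} (h : X -> ERext) : Prop :=
  forall x y t, 0 <= t <= 1 ->
    ele (h (hadd (hscal t x) (hscal (1 - t) y)))
        (match h x, h y with
         | Fin a, Fin b => Fin (t * a + (1 - t) * b)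
         | _, _ => Pinfty end).

Definition convex_real {X : Hilbert} (h : X -> R) : Prop :=
  forall x y t, 0 <= t <= 1 ->
    h (hadd (hscal t x) (hscal (1 - t) y)) <= t * h x + (1 - t) * h y.

Definition hypoconvex {X : Hilbert} (omega : R) (g : X -> ERext) : Prop :=
  convex_ext (fun x => eplus (g x) (omega / 2 * hnorm x ^ 2)).

Definition strongly_convex {X : Hilbert} (mu : R) (f : X -> R) : Prop :=
  convex_real (fun x => f x - mu / 2 * hnorm x ^ 2).

Definition is_frechet_gradient {X : Hilbert} (f : X -> R) (gradf : X -> X) : Prop :=
  forall x eps, 0 < eps -> exists d, 0 < d /\ forall h : X, hnorm h < d ->
    Rabs (f (hadd x h) - f x - hinner (gradf x) h) <= eps * hnorm h.

Definition lipschitz {X : Hilbert} (beta : R) (F : X -> X) : Prop :=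
  forall x y, hnorm (hsub (F x) (F y)) <= beta * hnorm (hsub x y).

Definition is_argmin_sum {X : Hilbert} (f : X -> R) (g : X -> ERext) (x : X) : Prop :=
  in_dom g x /\ forall y, ele (eplus (g x) (f x)) (eplus (g y) (f y)).

Definition is_prox_point {X : Hilbert} (gamma : R) (g : X -> ERext) (x p : X) : Prop :=
  is_argmin_sum (fun y => / (2 * gamma) * hnorm (hsub x y) ^ 2) g p.

(** prox_{gamma g}(x): the minimizer (unique when gamma*omega < 1, see paper) *)
Definition prox {X : Hilbert} (gamma : R) (g : X -> ERext) (x : X) : X :=
  epsilon (inhabits hzero) (fun p => is_prox_point gamma g x p).

Definition fb_op {X : Hilbert} (gamma : R) (g : X -> ERext) (gradf : X -> X) (x : X) : X :=
  prox gamma g (hsub x (hscal gamma (gradf x))).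

Definition weak_cv {X : Hilbert} (u : nat -> X) (l : X) : Prop :=
  forall y : X, Un_cv (fun n => hinner (u n) y) (hinner l y).

Definition strong_cv {X : Hilbert} (u : nat -> X) (l : X) : Prop :=
  Un_cv (fun n => hnorm (hsub (u n) l)) 0.

(* The forward step [x |-> x - gamma grad f x] is [(1 - gamma mu)]-Lipschitz,
   because [grad f - mu Id] is [1/beta]-cocoercive (Baillon-Haddad).  For an
   [omega]-hypoconvex [g], the optimality conditions of two proximal problems
   give [(1 - gamma omega) |p - q|^2 <= <u - v, p - q>] for [p = prox u] and
   [q = prox v].  Hence [T] is a [delta]-contraction, which gives the linear
   rate when [mu > omega]; since [mu >= omega], first-order conditions are
   sufficient and the fixed points of [T] are exactly the minimizers.  When
   [mu = omega], combining the two inequalities shows that [T] is averaged,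
   and the Krasnosel'skii-Mann argument (Fejer monotonicity, asymptotic
   regularity, demiclosedness of [Id - T]) gives weak convergence.  Weak
   compactness of bounded sets is replaced by the fact that a bounded sequence
   has a point in the closed convex hull of each of its tails: the minimal-norm
   points of these nested hulls form a Cauchy sequence.  The prox exists for
   the same reason: minimizing sequences of the [(1/gamma - omega)]-strongly
   convex proximal objective are Cauchy. *)
From Stdlib Require Import Reals Lra Psatz ClassicalEpsilon Classical Lia.
Open Scope R_scope.

Lemma le_of_le_add_eps (a b K : R) : (forall e, 0 < e <= 1 -> a <= b + e * K) -> a <= b.
Proof.
  intro H. destruct (Rle_dec a b) as [|Hn]; [assumption|].
  exfalso. assert (HK := Rabs_pos K).
  set (e := Rmin 1 ((a - b) / (2 * (Rabs K + 1)))).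
  assert (He0 : 0 < (a - b) / (2 * (Rabs K + 1))) by (apply Rdiv_lt_0_compat; lra).
  assert (He : 0 < e <= 1) by (unfold e; split; [apply Rmin_glb_lt; lra| apply Rmin_l]).
  specialize (H e He).
  assert (e * K <= e * Rabs K) by (apply Rmult_le_compat_l; [lra| apply Rle_abs]).
  assert (e <= (a - b) / (2 * (Rabs K + 1))) by apply Rmin_r.
  assert (e * (Rabs K + 1) <= (a - b) / 2).
  { apply Rle_trans with ((a - b) / (2 * (Rabs K + 1)) * (Rabs K + 1)).
    - apply Rmult_le_compat_r; lra.
    - right. field. lra. }
  nra.
Qed.

Lemma nonpos_of_pos_mul_nonpos (t Z : R) : 0 < t -> t * Z <= 0 -> Z <= 0.
Proof. intros. nra. Qed.

Lemma Rabs_le_inv (a b : R) : Rabs a <= b -> - b <= a <= b.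
Proof. unfold Rabs; destruct (Rcase_abs a); intros; lra. Qed.

Lemma lt_mul_div_succ (e a : R) : 0 < e -> 0 <= a -> e * (a / (a + 1)) < e.
Proof.
  intros He Ha. assert (a / (a + 1) < 1).
  { apply Rmult_lt_reg_r with (a + 1); [lra|].
    unfold Rdiv; rewrite Rmult_assoc, Rinv_l by lra. lra. }
  nra.
Qed.

Lemma inf_exists (E : R -> Prop) m0 : (exists v, E v) -> (forall v, E v -> m0 <= v) ->
  exists m, (forall v, E v -> m <= v) /\ (forall m', m < m' -> exists v, E v /\ v < m').
Proof.
  intros [v0 Hv0] Hlb.
  destruct (completeness (fun w => E (- w))) as [l [Hub Hl]].
  - exists (- m0). intros w Hw. specialize (Hlb _ Hw). lra.
  - exists (- v0). rewrite Ropp_involutive. exact Hv0.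
  - exists (- l). split.
    + intros v Hv. assert (Hv' : E (- - v)) by (rewrite Ropp_involutive; exact Hv).
      specialize (Hub _ Hv'). lra.
    + intros m' Hm'. apply NNPP. intro Hn.
      assert (Hb : is_upper_bound (fun w => E (- w)) (- m')).
      { intros w Hw. destruct (Rle_dec w (- m')) as [|Hw']; [assumption|].
        exfalso. apply Hn. exists (- w). split; [exact Hw| lra]. }
      specialize (Hl _ Hb). lra.
Qed.

Lemma inv_succ_pos (n : nat) : 0 < / (INR n + 1).
Proof. apply Rinv_0_lt_compat. assert (0 <= INR n) by apply pos_INR. lra. Qed.

Lemma inv_succ_le (n N : nat) : (N <= n)%nat -> / (INR n + 1) <= / (INR N + 1).
Proof.
  intro H. apply Rinv_le_contravar.
  - assert (0 <= INR N) by apply pos_INR. lra.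
  - apply le_INR in H. lra.
Qed.

Lemma exists_inv_succ_lt (e : R) : 0 < e -> exists N, / (INR N + 1) < e.
Proof.
  intro He. destruct (archimed_cor1 e He) as [N [HN HN0]]. exists N.
  eapply Rle_lt_trans; [|exact HN]. apply Rinv_le_contravar.
  - apply lt_0_INR. exact HN0.
  - lra.
Qed.

Section InnerProduct.
Context {X : Hilbert}.
Implicit Types x y z u v w : X.

Lemma hinner_zero_l y : hinner hzero y = 0.
Proof. assert (H := hinner_add_l X hzero hzero y). rewrite hadd_zero in H. lra. Qed.

Lemma hinner_opp_l x y : hinner (hopp x) y = - hinner x y.
Proof.
  assert (H := hinner_add_l X x (hopp x) y). rewrite hadd_opp, hinner_zero_l in H. lra.
Qed.

Lemma hinner_add_r x y z : hinner x (hadd y z) = hinner x y + hinner x z.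
Proof. rewrite hinner_sym, hinner_add_l, (hinner_sym X y), (hinner_sym X z). reflexivity. Qed.

Lemma hinner_scal_r a x y : hinner x (hscal a y) = a * hinner x y.
Proof. rewrite hinner_sym, hinner_scal_l, (hinner_sym X y). reflexivity. Qed.

Lemma hinner_opp_r x y : hinner x (hopp y) = - hinner x y.
Proof. rewrite hinner_sym, hinner_opp_l, (hinner_sym X y). reflexivity. Qed.

Lemma hinner_zero_r y : hinner y hzero = 0.
Proof. rewrite hinner_sym. apply hinner_zero_l. Qed.

Lemma hinner_sub_l x y z : hinner (hsub x y) z = hinner x z - hinner y z.
Proof. unfold hsub. rewrite hinner_add_l, hinner_opp_l. ring. Qed.

Lemma hinner_sub_r x y z : hinner z (hsub x y) = hinner z x - hinner z y.
Proof. unfold hsub. rewrite hinner_add_r, hinner_opp_r. ring. Qed.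

End InnerProduct.

Ltac hinner_expand := repeat (rewrite ?hinner_sub_l, ?hinner_sub_r, ?hinner_add_l,
   ?hinner_add_r, ?hinner_scal_l, ?hinner_scal_r, ?hinner_opp_l, ?hinner_opp_r,
   ?hinner_zero_l, ?hinner_zero_r).
Ltac hinner_expand_in H := repeat (rewrite ?hinner_sub_l, ?hinner_sub_r, ?hinner_add_l,
   ?hinner_add_r, ?hinner_scal_l, ?hinner_scal_r, ?hinner_opp_l, ?hinner_opp_r,
   ?hinner_zero_l, ?hinner_zero_r in H).

Section Norm.
Context {X : Hilbert}.
Implicit Types x y z u v w : X.

Lemma hsub_eq0 x y : hsub x y = hzero -> x = y.
Proof.
  unfold hsub; intro H.
  rewrite <- (hadd_zero X x), <- (hadd_opp X y), (hadd_comm X y), hadd_assoc, H,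
    hadd_comm, hadd_zero. reflexivity.
Qed.

Lemma hilbert_ext x y : (forall w, hinner x w = hinner y w) -> x = y.
Proof. intro H. apply hsub_eq0, hinner_def. rewrite hinner_sub_l, !H. ring. Qed.

Lemma hinner_sub_self_eq0 x y : hinner (hsub x y) (hsub x y) = 0 -> x = y.
Proof. intro H. apply hsub_eq0, hinner_def, H. Qed.

Lemma hsub_self x : hsub x x = hzero.
Proof. apply hadd_opp. Qed.

Lemma hinner_sub_sym x y : hinner (hsub x y) (hsub x y) = hinner (hsub y x) (hsub y x).
Proof. hinner_expand. rewrite (hinner_sym X y x). ring. Qed.

Lemma hinner_sub_split z a b : hinner (hsub z b) (hsub z b) =
  hinner (hsub z a) (hsub z a) + 2 * hinner (hsub z a) (hsub a b) + hinner (hsub a b) (hsub a b).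
Proof. hinner_expand. rewrite ?(hinner_sym X a z), ?(hinner_sym X b z), ?(hinner_sym X b a). ring. Qed.

Lemma hinner_sub_le x y : hinner (hsub x y) (hsub x y) <= 2 * hinner x x + 2 * hinner y y.
Proof.
  assert (H := hinner_pos _ (hadd x y)). hinner_expand_in H. hinner_expand.
  rewrite (hinner_sym X y x) in *. lra.
Qed.

Lemma hnorm_sq x : hnorm x ^ 2 = hinner x x.
Proof. unfold hnorm. rewrite pow2_sqrt; [reflexivity| apply hinner_pos]. Qed.

Lemma hnorm_ge0 x : 0 <= hnorm x.
Proof. unfold hnorm. apply sqrt_pos. Qed.

Lemma hnorm_scal t x : hnorm (hscal t x) = Rabs t * hnorm x.
Proof.
  unfold hnorm. hinner_expand.
  replace (t * (t * hinner x x)) with (Rsqr t * hinner x x) by (unfold Rsqr; ring).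
  rewrite sqrt_mult; [| apply Rle_0_sqr| apply hinner_pos].
  rewrite sqrt_Rsqr_abs. reflexivity.
Qed.

Lemma hnorm_le_of_sq x e : 0 <= e -> hinner x x <= e ^ 2 -> hnorm x <= e.
Proof. intros He H. unfold hnorm. rewrite <- (sqrt_pow2 e He). apply sqrt_le_1_alt, H. Qed.

Lemma hnorm_lt_of_sq x e : 0 <= e -> hinner x x < e ^ 2 -> hnorm x < e.
Proof.
  intros He H. unfold hnorm. rewrite <- (sqrt_pow2 e He). apply sqrt_lt_1_alt.
  split; [apply hinner_pos| exact H].
Qed.

Lemma hnorm_le_1_add_sq x : hnorm x <= 1 + hinner x x.
Proof. assert (H := hinner_pos _ x). apply hnorm_le_of_sq; nra. Qed.

Lemma cauchy_schwarz_sq x y : hinner x y ^ 2 <= hinner x x * hinner y y.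
Proof.
  destruct (Req_dec (hinner y y) 0) as [H0|H0].
  - apply hinner_def in H0. subst. rewrite !hinner_zero_r. simpl. lra.
  - assert (Hp : 0 < hinner y y) by (assert (H := hinner_pos _ y); lra).
    set (t := hinner x y / hinner y y).
    assert (H := hinner_pos _ (hsub x (hscal t y))).
    hinner_expand_in H. rewrite (hinner_sym X y x) in H.
    unfold t in H. field_simplify in H; [|lra].
    unfold Rdiv in H; apply Rmult_le_compat_r with (r := hinner y y) in H; [| lra].
    rewrite Rmult_0_l, Rmult_assoc, Rinv_l, Rmult_1_r in H; lra.
Qed.

Lemma cauchy_schwarz x y : Rabs (hinner x y) <= hnorm x * hnorm y.
Proof.
  unfold hnorm. rewrite <- sqrt_mult by apply hinner_pos.
  rewrite <- sqrt_Rsqr_abs. apply sqrt_le_1_alt. unfold Rsqr.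
  assert (H := cauchy_schwarz_sq x y). simpl in H. lra.
Qed.

Lemma hinner_le_hnorm x y : hinner x y <= hnorm x * hnorm y.
Proof. eapply Rle_trans; [apply Rle_abs| apply cauchy_schwarz]. Qed.

Lemma hinner_young x y beta : 0 < beta -> hinner x y <= hinner x x / beta + beta / 4 * hinner y y.
Proof.
  intro Hb. assert (H := hinner_pos _ (hsub (hscal (2 / beta) x) y)).
  hinner_expand_in H. rewrite (hinner_sym X y x) in H.
  apply Rmult_le_compat_l with (r := beta / 4) in H; [|lra].
  replace (beta / 4 * (2 / beta * (2 / beta * hinner x x) - 2 / beta * hinner x y
                       - (2 / beta * hinner x y - hinner y y)))
    with (hinner x x / beta - hinner x y + beta / 4 * hinner y y) in H by (field; lra).
  lra.
Qed.

Lemma hnorm_sq_sub_diff u p y :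
  Rabs (hnorm (hsub u y) ^ 2 - hnorm (hsub u p) ^ 2) <=
  hnorm (hsub y p) ^ 2 + 2 * hnorm (hsub u p) * hnorm (hsub y p).
Proof.
  assert (E : hnorm (hsub u y) ^ 2 - hnorm (hsub u p) ^ 2 =
              hnorm (hsub y p) ^ 2 - 2 * hinner (hsub u p) (hsub y p)).
  { rewrite !hnorm_sq. hinner_expand.
    rewrite ?(hinner_sym X y u), ?(hinner_sym X p u), ?(hinner_sym X y p). ring. }
  rewrite E. assert (H := cauchy_schwarz (hsub u p) (hsub y p)). apply Rabs_le_inv in H.
  assert (0 <= hnorm (hsub y p) ^ 2) by apply pow2_ge_0.
  apply Rabs_le; lra.
Qed.

Lemma segment_eq x y t :
  hadd (hscal t y) (hscal (1 - t) x) = hadd x (hscal t (hsub y x)).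
Proof. apply hilbert_ext; intro w; hinner_expand; ring. Qed.

Lemma hadd_sub_l x h : hsub (hadd x h) x = h.
Proof. apply hilbert_ext; intro w; hinner_expand; ring. Qed.

Lemma hadd_scal_shift x d t h :
  hadd x (hscal (t + h) d) = hadd (hadd x (hscal t d)) (hscal h d).
Proof. apply hilbert_ext; intro w; hinner_expand; ring. Qed.

End Norm.

(** * Smooth strongly convex functions *)

Section SmoothFunctions.
Context {X : Hilbert}.
Variables (f : X -> R) (gradf : X -> X).
Hypothesis f_grad : is_frechet_gradient f gradf.

Lemma strongly_convex_gradient_ineq mu : 0 <= mu -> strongly_convex mu f -> forall x y,
  f x + hinner (gradf x) (hsub y x) + mu / 2 * hinner (hsub y x) (hsub y x) <= f y.
Proof.
  intros Hmu Hs x y.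
  assert (Hy : hinner y y = hinner x x + 2 * hinner x (hsub y x) + hinner (hsub y x) (hsub y x)).
  { hinner_expand. rewrite (hinner_sym X y x). ring. }
  set (d := hsub y x) in *.
  apply le_of_le_add_eps with (K := hnorm d + mu / 2 * hinner d d). intros e He.
  destruct (f_grad x e (proj1 He)) as [dl [Hdl Hh]].
  assert (Hnd := hnorm_ge0 d).
  set (t := Rmin e (dl / (2 * (hnorm d + 1)))).
  assert (Hte : t <= e) by apply Rmin_l.
  assert (Ht0 : 0 < t) by (apply Rmin_glb_lt; [lra| apply Rdiv_lt_0_compat; lra]).
  assert (Htd : t * hnorm d < dl).
  { assert (t <= dl / (2 * (hnorm d + 1))) by apply Rmin_r.
    assert (t * (hnorm d + 1) <= dl / 2).
    { apply Rle_trans with (dl / (2 * (hnorm d + 1)) * (hnorm d + 1)).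
      - apply Rmult_le_compat_r; lra.
      - right. field. lra. }
    nra. }
  clearbody t.
  assert (Hsc := Hs y x t ltac:(lra)). cbv beta in Hsc.
  rewrite segment_eq in Hsc. fold d in Hsc. rewrite !hnorm_sq in Hsc.
  hinner_expand_in Hsc. rewrite Hy, (hinner_sym X d x) in Hsc.
  assert (Hn : hnorm (hscal t d) < dl) by (rewrite hnorm_scal, Rabs_pos_eq; lra).
  specialize (Hh (hscal t d) Hn).
  rewrite hnorm_scal, (Rabs_pos_eq t), hinner_scal_r in Hh by lra.
  destruct (Rabs_le_inv _ _ Hh) as [Hh' _].
  assert (Hdd : 0 <= hinner d d) by apply hinner_pos.
  assert (Z : t * (f x + hinner (gradf x) d + mu / 2 * hinner d d
                   - (f y + e * (hnorm d + mu / 2 * hinner d d))) <= 0).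
  { assert (0 <= t * (mu * hinner d d) * (e - t)) by (repeat apply Rmult_le_pos; lra). lra. }
  apply nonpos_of_pos_mul_nonpos in Z; lra.
Qed.

Lemma frechet_derivable_on_line x d t0 :
  derivable_pt_lim (fun t => f (hadd x (hscal t d))) t0 (hinner (gradf (hadd x (hscal t0 d))) d).
Proof.
  intros eps Heps.
  assert (Hnd := hnorm_ge0 d).
  set (x1 := hadd x (hscal t0 d)).
  assert (He' : 0 < eps / (2 * (hnorm d + 1))) by (apply Rdiv_lt_0_compat; lra).
  destruct (f_grad x1 _ He') as [dl [Hdl Hh]].
  assert (Hp : 0 < dl / (hnorm d + 1)) by (apply Rdiv_lt_0_compat; lra).
  exists (mkposreal _ Hp). simpl. intros h Hh0 Hhd.
  rewrite hadd_scal_shift. fold x1.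
  assert (Hn : hnorm (hscal h d) < dl).
  { rewrite hnorm_scal. apply Rmult_lt_compat_r with (r := hnorm d + 1) in Hhd; [|lra].
    unfold Rdiv in Hhd. rewrite Rmult_assoc, Rinv_l, Rmult_1_r in Hhd by lra.
    assert (0 <= Rabs h) by apply Rabs_pos. nra. }
  specialize (Hh _ Hn). rewrite hnorm_scal, hinner_scal_r in Hh.
  assert (Hah : 0 < Rabs h) by (apply Rabs_pos_lt; exact Hh0).
  replace ((f (hadd x1 (hscal h d)) - f x1) / h - hinner (gradf x1) d)
    with ((f (hadd x1 (hscal h d)) - f x1 - h * hinner (gradf x1) d) / h) by (field; exact Hh0).
  unfold Rdiv. rewrite Rabs_mult, Rabs_inv.
  apply Rle_lt_trans with (eps / (2 * (hnorm d + 1)) * (Rabs h * hnorm d) * / Rabs h).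
  { apply Rmult_le_compat_r; [left; apply Rinv_0_lt_compat; lra| exact Hh]. }
  replace (eps / (2 * (hnorm d + 1)) * (Rabs h * hnorm d) * / Rabs h)
     with (eps / 2 * (hnorm d / (hnorm d + 1))) by (field; lra).
  assert (H := lt_mul_div_succ (eps / 2) (hnorm d) ltac:(lra) Hnd). lra.
Qed.

(* Mean value theorem for [t |-> f (x + t d) - t <grad f x, d> - t^2 beta/2 |d|^2]. *)
Lemma descent_lemma beta : 0 <= beta -> lipschitz beta gradf -> forall x y,
  f y <= f x + hinner (gradf x) (hsub y x) + beta / 2 * hinner (hsub y x) (hsub y x).
Proof.
  intros Hb Hl x y.
  set (d := hsub y x). set (G := hinner (gradf x) d). set (K := beta / 2 * hinner d d).
  set (p := fun t => f (hadd x (hscal t d))).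
  set (psi := fun t => p t - (G * t + K * (t * t))).
  set (lp := fun t => hinner (gradf (hadd x (hscal t d))) d - (G * 1 + K * (1 * t + t * 1))).
  assert (Hd : forall t, derivable_pt_lim psi t (lp t)).
  { intro t. apply (derivable_pt_lim_minus p (fun t => G * t + K * (t * t))).
    - apply frechet_derivable_on_line.
    - apply (derivable_pt_lim_plus (mult_real_fct G id) (mult_real_fct K (mult_fct id id))).
      + apply derivable_pt_lim_scal, derivable_pt_lim_id.
      + apply derivable_pt_lim_scal.
        apply (derivable_pt_lim_mult id id); apply derivable_pt_lim_id. }
  set (pr := fun t => exist (fun l => derivable_pt_abs psi t l) (lp t) (Hd t) : derivable_pt psi t).
  destruct (MVT_cor1 psi 0 1 pr Rlt_0_1) as [c [Hc Hc01]].
  rewrite (derive_pt_eq_0 psi c (lp c) (pr c) (Hd c)) in Hc.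
  assert (Hlp : lp c <= 0).
  { unfold lp.
    assert (Hlc := Hl (hadd x (hscal c d)) x).
    rewrite hadd_sub_l, hnorm_scal, Rabs_pos_eq in Hlc by lra.
    assert (H1 := hinner_le_hnorm (hsub (gradf (hadd x (hscal c d))) (gradf x)) d).
    rewrite hinner_sub_l in H1. fold G in H1.
    assert (Hnd := hnorm_ge0 d).
    assert (H2 : hnorm (hsub (gradf (hadd x (hscal c d))) (gradf x)) * hnorm d
                 <= beta * (c * hnorm d) * hnorm d) by (apply Rmult_le_compat_r; lra).
    assert (E : hinner d d = hnorm d ^ 2) by (rewrite hnorm_sq; reflexivity).
    unfold K. rewrite E. nra. }
  assert (E1 : hadd x (hscal 1 d) = y) by (apply hilbert_ext; intro w; unfold d; hinner_expand; ring).
  assert (E0 : hadd x (hscal 0 d) = x) by (apply hilbert_ext; intro w; hinner_expand; ring).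
  unfold psi, p in Hc. rewrite E1, E0 in Hc.
  fold G K. nra.
Qed.

End SmoothFunctions.

Section BaillonHaddad.
Context {X : Hilbert}.
Variables (phi : X -> R) (gp : X -> X) (beta : R).
Hypothesis beta_pos : 0 < beta.
Hypothesis gp_lower : forall a b, phi a + hinner (gp a) (hsub b a) <= phi b.
Hypothesis gp_upper : forall a b,
  phi b <= phi a + hinner (gp a) (hsub b a) + beta / 2 * hinner (hsub b a) (hsub b a).

(* Compare [phi y] with [phi] at [z = y - (gp y - gp x) / beta]. *)
Lemma baillon_haddad_ineq x y : phi x + hinner (gp x) (hsub y x) +
  hinner (hsub (gp y) (gp x)) (hsub (gp y) (gp x)) / (2 * beta) <= phi y.
Proof.
  set (G := hsub (gp y) (gp x)).
  set (z := hsub y (hscal (/ beta) G)).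
  assert (H1 := gp_lower x z). assert (H2 := gp_upper y z).
  assert (E1 : hsub z x = hsub (hsub y x) (hscal (/beta) G))
    by (apply hilbert_ext; intro w; unfold z; hinner_expand; ring).
  assert (E2 : hsub z y = hscal (- / beta) G)
    by (apply hilbert_ext; intro w; unfold z; hinner_expand; ring).
  rewrite E1 in H1. rewrite E2 in H2. hinner_expand_in H1. hinner_expand_in H2.
  assert (EG : hinner (gp y) G - hinner (gp x) G = hinner G G)
    by (unfold G; hinner_expand; rewrite (hinner_sym X (gp x) (gp y)); ring).
  assert (Hbb : / beta * beta = 1) by (field; lra).
  assert (EE : hinner G G / (2 * beta) = / beta * hinner G G - / beta * / beta * hinner G G * (beta / 2))
    by (field; lra).
  rewrite EE, hinner_sub_r.
  nra.
Qed.

Lemma baillon_haddad x y : hinner (hsub (gp x) (gp y)) (hsub (gp x) (gp y)) <=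
  beta * hinner (hsub (gp x) (gp y)) (hsub x y).
Proof.
  assert (H1 := baillon_haddad_ineq x y). assert (H2 := baillon_haddad_ineq y x).
  rewrite hinner_sub_sym in H1.
  set (Q := hinner (hsub (gp x) (gp y)) (hsub (gp x) (gp y))) in *.
  assert (E : hinner (hsub (gp x) (gp y)) (hsub x y)
              = - (hinner (gp x) (hsub y x) + hinner (gp y) (hsub x y))) by (hinner_expand; ring).
  rewrite E.
  assert (Q / (2 * beta) * 2 * beta = Q) by (field; lra).
  nra.
Qed.

End BaillonHaddad.

Section GradientStep.
Context {X : Hilbert}.
Variables (mu beta : R) (f : X -> R) (gradf : X -> X).
Hypotheses (mu_ge0 : 0 <= mu) (beta_pos : 0 < beta).
Hypotheses (f_sc : strongly_convex mu f) (f_grad : is_frechet_gradient f gradf)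
  (gradf_lip : lipschitz beta gradf).

(* Baillon-Haddad applied to the convex function [f - mu/2 |.|^2]. *)
Lemma strongly_convex_cocoercive x y :
  hinner (hsub (hsub (gradf x) (gradf y)) (hscal mu (hsub x y)))
         (hsub (hsub (gradf x) (gradf y)) (hscal mu (hsub x y))) <=
  beta * hinner (hsub (hsub (gradf x) (gradf y)) (hscal mu (hsub x y))) (hsub x y).
Proof.
  set (phi := fun z => f z - mu / 2 * hinner z z).
  set (gp := fun z => hsub (gradf z) (hscal mu z)).
  assert (E : hsub (hsub (gradf x) (gradf y)) (hscal mu (hsub x y)) = hsub (gp x) (gp y))
    by (apply hilbert_ext; intro w; unfold gp; hinner_expand; ring).
  rewrite E. apply (baillon_haddad phi gp beta beta_pos).
  - intros a b. assert (H := strongly_convex_gradient_ineq f gradf f_grad mu mu_ge0 f_sc a b).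
    unfold phi, gp. hinner_expand. hinner_expand_in H. rewrite (hinner_sym X b a) in H; try rewrite (hinner_sym X b a). lra.
  - intros a b. assert (H := descent_lemma f gradf f_grad beta (Rlt_le _ _ beta_pos) gradf_lip a b).
    unfold phi, gp. assert (H2 := hinner_pos _ (hsub b a)).
    hinner_expand. hinner_expand_in H. hinner_expand_in H2.
    rewrite (hinner_sym X b a) in H, H2; try rewrite (hinner_sym X b a). nra.
Qed.

Lemma gradient_step_contraction gamma : 0 < gamma -> gamma * beta <= 2 * (1 - gamma * mu) ->
  forall x y,
  hinner (hsub (hsub x (hscal gamma (gradf x))) (hsub y (hscal gamma (gradf y))))
         (hsub (hsub x (hscal gamma (gradf x))) (hsub y (hscal gamma (gradf y)))) <=
  (1 - gamma * mu) ^ 2 * hinner (hsub x y) (hsub x y).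
Proof.
  intros Hg Hgb x y.
  assert (Hc := strongly_convex_cocoercive x y).
  set (Dl := hsub (hsub (gradf x) (gradf y)) (hscal mu (hsub x y))) in *.
  set (d := hsub x y) in *.
  assert (E : hsub (hsub x (hscal gamma (gradf x))) (hsub y (hscal gamma (gradf y))) =
              hsub (hscal (1 - gamma * mu) d) (hscal gamma Dl))
    by (apply hilbert_ext; intro w; unfold Dl, d; hinner_expand; ring).
  rewrite E. hinner_expand. rewrite (hinner_sym X Dl d).
  assert (HD := hinner_pos _ Dl).
  assert (Hq : 0 <= hinner d Dl) by (rewrite hinner_sym; nra).
  rewrite (hinner_sym X Dl d) in Hc.
  assert (gamma * hinner d Dl * (gamma * beta - 2 * (1 - gamma * mu)) <= 0).
  { assert (0 <= gamma * hinner d Dl) by nra. nra. }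
  assert (gamma ^ 2 * hinner Dl Dl <= gamma ^ 2 * (beta * hinner d Dl))
    by (apply Rmult_le_compat_l; nra).
  lra.
Qed.

End GradientStep.

(** * Minimizers of [f + g] with [g] hypoconvex *)

Section HypoconvexMinimizers.
Context {X : Hilbert}.
Variables (omega : R) (g : X -> ERext).
Hypothesis g_hypo : hypoconvex omega g.

(* First-order condition: compare [x] with the points [x + t (y - x)], [t -> 0],
   using the hypoconvexity of [g] and a quadratic upper model of [f] at [x]. *)
Lemma argmin_sum_variational_ineq (f : X -> R) x G L : is_argmin_sum f g x ->
  (forall y t, 0 < t <= 1 -> f (hadd x (hscal t (hsub y x))) <=
     f x + t * hinner G (hsub y x) + t ^ 2 * (L / 2) * hinner (hsub y x) (hsub y x)) ->
  forall y r, g y = Fin r -> exists rx, g x = Fin rx /\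
    rx <= r + hinner G (hsub y x) + omega / 2 * hinner (hsub y x) (hsub y x).
Proof.
  intros [[rx Hrx] Hmin] Hf y r Hr. exists rx. split; [exact Hrx|].
  assert (Hy : hinner y y = hinner x x + 2 * hinner x (hsub y x) + hinner (hsub y x) (hsub y x)).
  { hinner_expand. rewrite (hinner_sym X y x). ring. }
  set (d := hsub y x) in *.
  apply le_of_le_add_eps with (K := (L - omega) / 2 * hinner d d). intros t Ht.
  assert (Hc := g_hypo y x t ltac:(lra)). cbv beta in Hc.
  rewrite Hr, Hrx, segment_eq in Hc. fold d in Hc.
  assert (Hm := Hmin (hadd x (hscal t d))). rewrite Hrx in Hm.
  assert (Hft := Hf y t Ht). fold d in Hft.
  rewrite !hnorm_sq in Hc.
  destruct (g (hadd x (hscal t d))) as [s|]; simpl in Hc, Hm; [|contradiction].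
  hinner_expand_in Hc. rewrite Hy, (hinner_sym X d x) in Hc.
  assert (Z : t * (rx - (r + hinner G d + omega / 2 * hinner d d
                         + t * ((L - omega) / 2 * hinner d d))) <= 0) by lra.
  apply nonpos_of_pos_mul_nonpos in Z; lra.
Qed.

Lemma prox_point_variational_ineq gamma u p : 0 < gamma -> is_prox_point gamma g u p ->
  forall y r, g y = Fin r -> exists rp, g p = Fin rp /\
    rp <= r + / gamma * hinner (hsub p u) (hsub y p) + omega / 2 * hinner (hsub y p) (hsub y p).
Proof.
  intros Hg Hp y r Hr.
  destruct (argmin_sum_variational_ineq _ p (hscal (/ gamma) (hsub p u)) (/ gamma) Hp)
    with (y := y) (r := r) as [rp [Hrp Hv]]; [|exact Hr|].
  - intros z t _. right. rewrite !hnorm_sq. hinner_expand.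
    rewrite ?(hinner_sym X z u), ?(hinner_sym X z p), ?(hinner_sym X p u). field. lra.
  - exists rp. split; [exact Hrp|]. rewrite hinner_scal_l in Hv. exact Hv.
Qed.

(* Sum of the variational inequalities of [p] (tested at [q]) and of [q]
   (tested at [p]). *)
Lemma prox_point_cocoercive gamma u v p q : 0 < gamma ->
  is_prox_point gamma g u p -> is_prox_point gamma g v q ->
  (1 - gamma * omega) * hinner (hsub p q) (hsub p q) <= hinner (hsub u v) (hsub p q).
Proof.
  intros Hg Hp Hq.
  pose proof Hp as [[rp Hrp] _]. pose proof Hq as [[rq Hrq] _].
  destruct (prox_point_variational_ineq gamma u p Hg Hp q rq Hrq) as [rp' [H1 H2]].
  destruct (prox_point_variational_ineq gamma v q Hg Hq p rp Hrp) as [rq' [H3 H4]].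
  rewrite Hrp in H1. injection H1 as <-. rewrite Hrq in H3. injection H3 as <-.
  hinner_expand_in H2. hinner_expand_in H4. hinner_expand.
  rewrite ?(hinner_sym X q p), ?(hinner_sym X q u), ?(hinner_sym X q v), ?(hinner_sym X p u),
     ?(hinner_sym X p v) in H2, H4 |- *.
  set (N := hinner p p - hinner p q - (hinner p q - hinner q q)).
  set (W := hinner u p - hinner u q - (hinner v p - hinner v q)).
  assert (S : / gamma * (N - W) - omega * N <= 0) by (unfold N, W; lra).
  apply Rmult_le_compat_l with (r := gamma) in S; [|lra].
  replace (gamma * (/ gamma * (N - W) - omega * N)) with (N - W - gamma * omega * N) in S
    by (field; lra).
  lra.
Qed.

Lemma prox_point_unique gamma u p q : 0 < gamma -> gamma * omega < 1 ->
  is_prox_point gamma g u p -> is_prox_point gamma g u q -> p = q.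
Proof.
  intros Hg Hgo Hp Hq.
  assert (H := prox_point_cocoercive gamma u u p q Hg Hp Hq).
  rewrite hsub_self, hinner_zero_l in H. apply hinner_sub_self_eq0.
  assert (H2 := hinner_pos _ (hsub p q)). nra.
Qed.

End HypoconvexMinimizers.

Definition hlim {X : Hilbert} (u : nat -> X) (l : X) : Prop :=
  forall eps, 0 < eps -> exists N, forall n, (N <= n)%nat -> hnorm (hsub (u n) l) < eps.

Section Limits.
Context {X : Hilbert}.

Lemma hlim_of_sq_dist_le (u : nat -> X) (e : nat -> R) :
  (forall eps, 0 < eps -> exists N, forall n, (N <= n)%nat -> e n < eps) ->
  (forall n m, (n <= m)%nat -> hinner (hsub (u n) (u m)) (hsub (u n) (u m)) <= e n) ->
  exists l, hlim u l.
Proof.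
  intros He Hu. apply (hcomplete X u). intros eps Heps.
  destruct (He (eps ^ 2) ltac:(apply pow_lt; lra)) as [N HN].
  exists N. intros n m Hn Hm. change (hnorm (hsub (u n) (u m)) < eps).
  apply hnorm_lt_of_sq; [lra|].
  destruct (Compare_dec.le_lt_dec n m) as [Hnm|Hnm].
  - eapply Rle_lt_trans; [apply Hu, Hnm| apply HN, Hn].
  - rewrite hinner_sub_sym. eapply Rle_lt_trans; [apply Hu; lia| apply HN, Hm].
Qed.

Lemma hnorm_sq_sub_continuous (u p : X) eps : 0 < eps -> exists rho, 0 < rho /\
  forall y, hnorm (hsub y p) < rho -> Rabs (hnorm (hsub u y) ^ 2 - hnorm (hsub u p) ^ 2) < eps.
Proof.
  intros Heps. set (K := 1 + 2 * hnorm (hsub u p)).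
  assert (HK : 1 <= K) by (unfold K; assert (H := hnorm_ge0 (hsub u p)); lra).
  exists (Rmin 1 (eps / (2 * K))). split.
  { apply Rmin_glb_lt; [lra| apply Rdiv_lt_0_compat; lra]. }
  intros y Hy. eapply Rle_lt_trans; [apply hnorm_sq_sub_diff|].
  assert (Hy1 : hnorm (hsub y p) < 1) by (eapply Rlt_le_trans; [exact Hy| apply Rmin_l]).
  assert (Hy2 : hnorm (hsub y p) < eps / (2 * K)) by (eapply Rlt_le_trans; [exact Hy| apply Rmin_r]).
  assert (Hy0 := hnorm_ge0 (hsub y p)).
  assert (hnorm (hsub y p) * (2 * K) < eps).
  { apply Rmult_lt_compat_r with (r := 2 * K) in Hy2; [|lra].
    unfold Rdiv in Hy2. rewrite Rmult_assoc, Rinv_l, Rmult_1_r in Hy2 by lra. exact Hy2. }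
  unfold K in *. nra.
Qed.

Lemma lsc_le_of_hlim (g : X -> ERext) ys p L : lsc g -> hlim ys p ->
  (forall eps, 0 < eps -> exists N, forall n, (N <= n)%nat ->
     exists r, g (ys n) = Fin r /\ r <= L + eps) ->
  exists rp, g p = Fin rp /\ rp <= L.
Proof.
  intros Hl Hys Hr. apply NNPP. intro Hn.
  assert (Hc : exists c, L < c /\ elt (Fin c) (g p)).
  { destruct (g p) as [rp|] eqn:Hgp.
    - assert (L < rp) by (apply Rnot_le_lt; intro; apply Hn; exists rp; auto).
      exists ((rp + L) / 2). simpl. lra.
    - exists (L + 1). simpl. lra. }
  destruct Hc as [c [HLc Hc]].
  destruct (Hl p c Hc) as [e [He Hle]].
  destruct (Hys e He) as [N1 HN1].
  destruct (Hr ((c - L) / 2) ltac:(lra)) as [N2 HN2].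
  destruct (HN2 (Nat.max N1 N2) ltac:(lia)) as [r [Hgr Hrl]].
  specialize (Hle _ (HN1 (Nat.max N1 N2) ltac:(lia))).
  rewrite Hgr in Hle. simpl in Hle. lra.
Qed.

End Limits.

(** * Existence of the proximal point *)

Section HypoconvexLowerBound.
Context {X : Hilbert}.

Lemma hypoconvex_segment_lower_bound omega (g : X -> ERext) z0 r0 y r t c : 0 <= omega ->
  hypoconvex omega g -> g z0 = Fin r0 -> g y = Fin r -> 0 <= t <= 1 ->
  elt (Fin c) (g (hadd z0 (hscal t (hsub y z0)))) ->
  c < t * (r + omega / 2 * hinner y y) + (1 - t) * (r0 + omega / 2 * hinner z0 z0).
Proof.
  intros Hom Hh Hr0 Hr Ht Hc.
  assert (Hs := Hh y z0 t Ht). cbv beta in Hs. rewrite segment_eq, Hr, Hr0, !hnorm_sq in Hs.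
  destruct (g (hadd z0 (hscal t (hsub y z0)))) as [s|]; simpl in Hs, Hc; [|contradiction].
  assert (0 <= omega / 2 * hinner (hadd z0 (hscal t (hsub y z0))) (hadd z0 (hscal t (hsub y z0))))
    by (apply Rmult_le_pos; [lra| apply hinner_pos]).
  lra.
Qed.

(* Lower semicontinuity at a point [z0] of the domain bounds [g] below on a
   ball; hypoconvexity propagates the bound along the segments from [z0]. *)
Lemma hypoconvex_lsc_lower_bound omega (g : X -> ERext) : 0 <= omega ->
  proper_fun g -> lsc g -> hypoconvex omega g ->
  exists z0 A B, 0 <= A /\ 0 <= B /\ forall y r, g y = Fin r ->
    - A - B * hnorm (hsub y z0) - omega / 2 * hinner y y <= r.
Proof.
  intros Hom [z0 [r0 Hr0]] Hl Hh.
  destruct (Hl z0 (r0 - 1)) as [eps [Heps He]]. { rewrite Hr0. simpl. lra. }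
  set (w := omega / 2 * hinner z0 z0).
  assert (Hw : 0 <= w) by (unfold w; assert (H := hinner_pos _ z0); nra).
  set (C := 1 + Rabs r0 + w - r0).
  assert (Hr0abs := Rle_abs r0). assert (Hr0abs' : - r0 <= Rabs r0) by (rewrite <- Rabs_Ropp; apply Rle_abs).
  exists z0, (Rabs r0 + 1), (2 * C / eps).
  split; [assert (H := Rabs_pos r0); lra|]. split; [apply Rlt_le, Rdiv_lt_0_compat; unfold C; lra|].
  intros y r Hr.
  assert (Hyy := hinner_pos _ y).
  set (n := hnorm (hsub y z0)). assert (Hn : 0 <= n) by apply hnorm_ge0.
  assert (HB : 0 <= 2 * C / eps * n)
    by (apply Rmult_le_pos; [apply Rlt_le, Rdiv_lt_0_compat; unfold C; lra| lra]).
  destruct (Rlt_dec n eps) as [Hlt | Hge].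
  - specialize (He y Hlt). rewrite Hr in He. simpl in He. nra.
  - apply Rnot_lt_le in Hge.
    set (t := eps / (2 * n)).
    assert (Ht0 : 0 < t) by (apply Rdiv_lt_0_compat; lra).
    assert (Htn : t * n = eps / 2) by (unfold t; field; lra).
    assert (Ht1 : t <= 1 / 2) by nra.
    assert (Hd : hnorm (hsub (hadd z0 (hscal t (hsub y z0))) z0) < eps)
      by (rewrite hadd_sub_l, hnorm_scal, Rabs_pos_eq by lra; fold n; lra).
    assert (Hc := hypoconvex_segment_lower_bound omega g z0 r0 y r t (r0 - 1) Hom Hh Hr0 Hr
                    ltac:(lra) (He _ Hd)).
    fold w in Hc.
    assert (Hk : - C <= t * (r + omega / 2 * hinner y y)).
    { assert ((1 - t) * (r0 + w) <= Rabs r0 + w) by (destruct (Rle_dec 0 (r0 + w)); nra).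
      unfold C. lra. }
    assert (Hk2 : - (2 * C / eps * n) <= r + omega / 2 * hinner y y).
    { apply Rmult_le_reg_l with t; [exact Ht0|].
      replace (t * - (2 * C / eps * n)) with (- C) by (unfold t; field; lra). exact Hk. }
    assert (H := Rabs_pos r0). lra.
Qed.

End HypoconvexLowerBound.

Section ProxExistence.
Context {X : Hilbert}.
Variables (gamma omega : R) (g : X -> ERext) (u : X).
Hypotheses (gamma_pos : 0 < gamma) (omega_ge0 : 0 <= omega) (gamma_omega : gamma * omega < 1).
Hypotheses (g_proper : proper_fun g) (g_lsc : lsc g) (g_hypo : hypoconvex omega g).

Let q (y : X) : R := / (2 * gamma) * hnorm (hsub u y) ^ 2.

(* The proximal objective is [(1/gamma - omega)]-strongly convex, hence coercive. *)
Lemma prox_objective_lower_bound : exists m0, forall y r, g y = Fin r -> m0 <= r + q y.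
Proof.
  destruct (hypoconvex_lsc_lower_bound omega g omega_ge0 g_proper g_lsc g_hypo)
    as [z0 [A [B [HA [HB Hlow]]]]].
  set (a := hsub u z0).
  set (c := / gamma - omega).
  assert (Hc : 0 < c).
  { unfold c. assert (omega < / gamma).
    { apply Rmult_lt_reg_l with gamma; [lra|]. rewrite Rinv_r by lra. lra. } lra. }
  set (D := B + omega * hnorm z0 + / gamma * hnorm a).
  exists (- A - omega / 2 * hinner z0 z0 - D ^ 2 / (2 * c)).
  intros y r Hr. specialize (Hlow y r Hr). unfold q.
  set (w := hsub y z0) in *.
  assert (Ey : hinner y y = hinner z0 z0 + 2 * hinner z0 w + hinner w w)
    by (unfold w; hinner_expand; rewrite (hinner_sym X y z0); ring).
  assert (Eu : hnorm (hsub u y) ^ 2 = hinner a a - 2 * hinner a w + hinner w w).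
  { rewrite hnorm_sq; unfold a, w; hinner_expand.
    rewrite ?(hinner_sym X y u), ?(hinner_sym X z0 u), ?(hinner_sym X y z0); ring. }
  rewrite Eu. rewrite Ey in Hlow.
  set (n := hnorm w) in *.
  assert (Ew : hinner w w = n ^ 2) by (unfold n; rewrite hnorm_sq; reflexivity).
  rewrite Ew in Hlow |- *.
  assert (C1 := hinner_le_hnorm z0 w). assert (C2 := hinner_le_hnorm a w). fold n in C1, C2.
  assert (Haa := hinner_pos _ a).
  assert (Hn := hnorm_ge0 w). fold n in Hn.
  assert (Hz := hnorm_ge0 z0). assert (Ha := hnorm_ge0 a).
  assert (Hsq : 0 <= c / 2 * (n - D / c) ^ 2) by (apply Rmult_le_pos; [lra| apply pow2_ge_0]).
  assert (Eid : c / 2 * (n - D / c) ^ 2 = c / 2 * n ^ 2 - D * n + D ^ 2 / (2 * c)) by (field; lra).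
  assert (T1 : omega * hinner z0 w <= omega * (hnorm z0 * n)) by (apply Rmult_le_compat_l; lra).
  assert (T2 : / gamma * hinner a w <= / gamma * (hnorm a * n))
    by (apply Rmult_le_compat_l; [left; apply Rinv_0_lt_compat; lra| lra]).
  assert (T3 : 0 <= / (2 * gamma) * hinner a a)
    by (apply Rmult_le_pos; [left; apply Rinv_0_lt_compat; lra| lra]).
  assert (Eg : / (2 * gamma) = / gamma / 2) by (field; lra). rewrite Eg in T3 |- *.
  assert (EDn : D * n = B * n + omega * (hnorm z0 * n) + / gamma * (hnorm a * n)) by (unfold D; ring).
  assert (Ecn : c / 2 * n ^ 2 = / gamma / 2 * n ^ 2 - omega / 2 * n ^ 2) by (unfold c; field; lra).
  clearbody D c n.
  assert (HBn : 0 <= B * n) by nra.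
  lra.
Qed.

Lemma prox_objective_midpoint y1 y2 r1 r2 : g y1 = Fin r1 -> g y2 = Fin r2 ->
  exists s, g (hadd (hscal (1/2) y1) (hscal (1 - 1/2) y2)) = Fin s /\
   s + q (hadd (hscal (1/2) y1) (hscal (1 - 1/2) y2)) <=
   (r1 + q y1 + (r2 + q y2)) / 2 - (/ gamma - omega) / 8 * hinner (hsub y1 y2) (hsub y1 y2).
Proof.
  intros H1 H2. unfold q.
  assert (Hc := g_hypo y1 y2 (1/2) ltac:(lra)). cbv beta in Hc.
  rewrite H1, H2 in Hc. rewrite !hnorm_sq in Hc |- *.
  destruct (g (hadd (hscal (1/2) y1) (hscal (1 - 1/2) y2))) as [s|]; simpl in Hc; [|contradiction].
  exists s. split; [reflexivity|].
  hinner_expand_in Hc. hinner_expand.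
  rewrite ?(hinner_sym X y2 y1), ?(hinner_sym X y1 u), ?(hinner_sym X y2 u) in Hc |- *.
  assert (Eg : / (2 * gamma) = / gamma / 2) by (field; lra). rewrite Eg.
  lra.
Qed.

Lemma prox_minimizing_sequence : exists m (ys : nat -> X),
  (forall y r, g y = Fin r -> m <= r + q y) /\
  (forall n, exists r, g (ys n) = Fin r /\ r + q (ys n) < m + / (INR n + 1)).
Proof.
  destruct prox_objective_lower_bound as [m0 Hm0].
  destruct (inf_exists (fun v => exists y r, g y = Fin r /\ v = r + q y) m0) as [m [Hm1 Hm2]].
  { destruct g_proper as [y [r Hr]]. exists (r + q y), y, r. auto. }
  { intros v [y [r [Hr ->]]]. apply Hm0, Hr. }
  set (Pn := fun n y => exists r, g y = Fin r /\ r + q y < m + / (INR n + 1)).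
  assert (HPn : forall n, exists y, Pn n y).
  { intro n. assert (Hpos := inv_succ_pos n).
    destruct (Hm2 (m + / (INR n + 1))) as [v [[y [r [Hr ->]]] Hv]]; [lra|].
    exists y, r. auto. }
  exists m, (fun n => epsilon (inhabits hzero) (Pn n)). split.
  - intros y r Hr. apply Hm1. exists y, r. auto.
  - intro n. apply (epsilon_spec (inhabits hzero) (Pn n)), HPn.
Qed.

(* By [prox_objective_midpoint], two almost-minimizers far apart would have a
   midpoint below the infimum. *)
Lemma prox_minimizing_sequence_converges m (ys : nat -> X) :
  (forall y r, g y = Fin r -> m <= r + q y) ->
  (forall n, exists r, g (ys n) = Fin r /\ r + q (ys n) < m + / (INR n + 1)) ->
  exists p, hlim ys p.
Proof.
  intros Hm Hys.
  set (c := / gamma - omega).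
  assert (Hc : 0 < c).
  { unfold c. assert (omega < / gamma).
    { apply Rmult_lt_reg_l with gamma; [lra|]. rewrite Rinv_r by lra. lra. } lra. }
  apply (hlim_of_sq_dist_le ys (fun n => 8 / c * / (INR n + 1))).
  - intros eps Heps.
    assert (Hec : 0 < eps * c / 8) by (apply Rmult_lt_0_compat; [apply Rmult_lt_0_compat|]; lra).
    destruct (exists_inv_succ_lt _ Hec) as [N HN].
    exists N. intros n Hn. assert (Hi := inv_succ_le n N Hn).
    assert (H8c : 0 < 8 / c) by (apply Rdiv_lt_0_compat; lra).
    apply Rle_lt_trans with (8 / c * / (INR N + 1)); [apply Rmult_le_compat_l; lra|].
    apply Rlt_le_trans with (8 / c * (eps * c / 8)); [apply Rmult_lt_compat_l; lra|].
    right. field. lra.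
  - intros n k Hnk. destruct (Hys n) as [rn [Hrn Hln]]. destruct (Hys k) as [rk [Hrk Hlk]].
    destruct (prox_objective_midpoint (ys n) (ys k) rn rk Hrn Hrk) as [s [Hs Hsl]].
    assert (Hmid := Hm _ s Hs).
    assert (Hi := inv_succ_le k n Hnk). fold c in Hsl.
    apply Rmult_le_reg_l with (c / 8); [lra|].
    assert (0 <= INR n) by apply pos_INR.
    replace (c / 8 * (8 / c * / (INR n + 1))) with (/ (INR n + 1)) by (field; lra).
    lra.
Qed.

Lemma prox_point_exists : exists p, is_prox_point gamma g u p.
Proof.
  destruct prox_minimizing_sequence as [m [ys [Hm Hys]]].
  destruct (prox_minimizing_sequence_converges m ys Hm Hys) as [p Hp].
  destruct (lsc_le_of_hlim g ys p (m - q p) g_lsc Hp) as [rp [Hrp Hrpm]].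
  { intros eps Heps.
    destruct (hnorm_sq_sub_continuous u p (gamma * eps) ltac:(nra)) as [rho [Hrho Hq]].
    destruct (Hp rho Hrho) as [N1 HN1].
    destruct (exists_inv_succ_lt (eps / 2) ltac:(lra)) as [N2 HN2].
    exists (Nat.max N1 N2). intros n Hn.
    destruct (Hys n) as [rn [Hrn Hln]]. exists rn. split; [exact Hrn|].
    assert (Hi := inv_succ_le n N2 ltac:(lia)).
    assert (Hqn := Rabs_le_inv _ _ (Rlt_le _ _ (Hq (ys n) (HN1 n ltac:(lia))))).
    assert (Hqq : q p - q (ys n) <= eps / 2).
    { unfold q. assert (Eg : / (2 * gamma) * (gamma * eps) = eps / 2) by (field; lra).
      assert (0 < / (2 * gamma)) by (apply Rinv_0_lt_compat; lra).
      rewrite <- Eg, <- Rmult_minus_distr_l. apply Rmult_le_compat_l; lra. }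
    lra. }
  exists p. split; [exists rp; exact Hrp|].
  intro y. rewrite Hrp. destruct (g y) as [r|] eqn:Hgy; simpl; [|exact I].
  assert (Hy := Hm y r Hgy). unfold q in *. lra.
Qed.

End ProxExistence.

Lemma prox_spec {X : Hilbert} gamma omega (g : X -> ERext) u : 0 < gamma -> 0 <= omega ->
  gamma * omega < 1 -> proper_fun g -> lsc g -> hypoconvex omega g ->
  is_prox_point gamma g u (prox gamma g u).
Proof. intros. unfold prox. apply epsilon_spec. eapply prox_point_exists; eauto. Qed.

(** * The forward-backward operator *)

(* [T] is [1/(1 + kappa)]-averaged in the usual sense. *)
Definition averaged {X : Hilbert} (kappa : R) (T : X -> X) : Prop :=
  forall x y, kappa * hinner (hsub (hsub x y) (hsub (T x) (T y))) (hsub (hsub x y) (hsub (T x) (T y)))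
    <= hinner (hsub x y) (hsub x y) - hinner (hsub (T x) (T y)) (hsub (T x) (T y)).

Lemma le_div_of_mul_sq_le (a b n : R) : 0 < a -> 0 <= b -> 0 <= n -> a * n ^ 2 <= b * n -> n <= b / a.
Proof.
  intros Ha Hb Hn H. apply Rmult_le_reg_l with a; [exact Ha|].
  replace (a * (b / a)) with b by (field; lra).
  destruct (Req_dec n 0) as [->|Hn0]; [nra|].
  apply Rmult_le_reg_r with n; [lra|]. nra.
Qed.

Section ForwardBackward.
Context {X : Hilbert}.
Variables (mu omega beta gamma : R) (f : X -> R) (gradf : X -> X) (g : X -> ERext).
Hypotheses (mu_ge_omega : mu >= omega) (omega_ge0 : omega >= 0) (beta_pos : beta > 0).
Hypotheses (f_sc : strongly_convex mu f) (f_grad : is_frechet_gradient f gradf)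
  (gradf_lip : lipschitz beta gradf).
Hypotheses (g_proper : proper_fun g) (g_lsc : lsc g) (g_hypo : hypoconvex omega g).
Hypothesis gamma_range : 0 < gamma < 2 / (beta + 2 * mu).

Let T := fb_op gamma g gradf.

Lemma step_size_small : gamma * (beta + 2 * mu) < 2.
Proof.
  destruct gamma_range as [_ H]. apply Rmult_lt_compat_r with (r := beta + 2 * mu) in H; [|lra].
  unfold Rdiv in H. rewrite Rmult_assoc, Rinv_l, Rmult_1_r in H by lra. exact H.
Qed.

Lemma gamma_mu_lt1 : gamma * mu < 1.
Proof. assert (H := step_size_small). nra. Qed.

Lemma gamma_omega_lt1 : gamma * omega < 1.
Proof. assert (H := gamma_mu_lt1). nra. Qed.

Lemma fb_op_prox_point x : is_prox_point gamma g (hsub x (hscal gamma (gradf x))) (T x).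
Proof.
  apply prox_spec with omega; try lra; try assumption. apply gamma_omega_lt1.
Qed.

Lemma fb_op_contraction x y :
  hnorm (hsub (T x) (T y)) <= (1 - gamma * mu) / (1 - gamma * omega) * hnorm (hsub x y).
Proof.
  assert (Hmu := gamma_mu_lt1). assert (Hom := gamma_omega_lt1).
  assert (Hf := prox_point_cocoercive omega g g_hypo gamma _ _ _ _ (proj1 gamma_range)
                  (fb_op_prox_point x) (fb_op_prox_point y)).
  assert (Hw := gradient_step_contraction mu beta f gradf ltac:(lra) beta_pos f_sc f_grad
                  gradf_lip gamma (proj1 gamma_range) ltac:(assert (H := step_size_small); lra) x y).
  set (e := hsub (T x) (T y)) in *.
  set (w := hsub (hsub x (hscal gamma (gradf x))) (hsub y (hscal gamma (gradf y)))) in *.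
  assert (Hnd := hnorm_ge0 (hsub x y)).
  assert (Hnw : hnorm w <= (1 - gamma * mu) * hnorm (hsub x y)).
  { apply hnorm_le_of_sq; [nra|]. rewrite Rpow_mult_distr, hnorm_sq. exact Hw. }
  assert (HC := hinner_le_hnorm w e). rewrite <- hnorm_sq in Hf.
  assert (Hne := hnorm_ge0 e).
  rewrite Rmult_comm, Rmult_div_assoc. apply le_div_of_mul_sq_le; [lra| nra| exact Hne|].
  rewrite (Rmult_comm (hnorm (hsub x y))). nra.
Qed.

(* For [omega = mu], add [gamma/(1 - gamma mu)] times the cocoercivity of
   [grad f - mu Id] to the prox inequality, and absorb the cross term by Young. *)
Lemma fb_op_averaged : omega = mu ->
  averaged (1 - gamma * beta / (2 * (1 - gamma * mu))) T.
Proof.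
  intros Heq x y. assert (G3 := gamma_mu_lt1).
  assert (Hh : hypoconvex mu g) by (rewrite <- Heq; exact g_hypo).
  assert (Hf := prox_point_cocoercive mu g Hh gamma _ _ _ _ (proj1 gamma_range)
                  (fb_op_prox_point x) (fb_op_prox_point y)).
  assert (Hc := strongly_convex_cocoercive mu beta f gradf ltac:(lra) beta_pos f_sc f_grad
                  gradf_lip x y).
  set (e := hsub (T x) (T y)) in *.
  set (Dl := hsub (hsub (gradf x) (gradf y)) (hscal mu (hsub x y))) in *.
  set (d := hsub x y) in *.
  assert (E : hsub (hsub x (hscal gamma (gradf x))) (hsub y (hscal gamma (gradf y))) =
              hsub (hscal (1 - gamma * mu) d) (hscal gamma Dl))
    by (apply hilbert_ext; intro w; unfold Dl, d; hinner_expand; ring).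
  rewrite E in Hf. clearbody e Dl d.
  set (s := 1 - gamma * mu) in *.
  assert (Hs : 0 < s) by (unfold s; lra).
  assert (Young := hinner_young Dl (hsub d e) beta beta_pos).
  hinner_expand_in Young. hinner_expand_in Hf. hinner_expand.
  rewrite ?(hinner_sym X e d), ?(hinner_sym X Dl d), ?(hinner_sym X Dl e) in *.
  set (a := hinner d d) in *. set (b := hinner e e) in *. set (p := hinner d e) in *.
  set (DD := hinner Dl Dl) in *. set (qq := hinner d Dl) in *. set (r := hinner e Dl) in *.
  clearbody a b p DD qq r.
  set (R := a - 2 * p + b).
  assert (Hq : DD / beta <= qq).
  { apply Rmult_le_reg_l with beta; [lra|].
    replace (beta * (DD / beta)) with DD by (field; lra). lra. }
  assert (Hr : - (beta / 4) * R <= r) by (unfold R; lra).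
  assert (Hpb : gamma / s * r <= p - b).
  { apply Rmult_le_reg_l with s; [lra|].
    replace (s * (gamma / s * r)) with (gamma * r) by (field; lra). lra. }
  assert (Hgs : 0 < gamma / s) by (apply Rdiv_lt_0_compat; lra).
  assert (gamma / s * (- (beta / 4) * R) <= gamma / s * r) by (apply Rmult_le_compat_l; lra).
  replace (gamma * beta / (2 * s)) with (2 * (gamma / s) * (beta / 4)) by (field; lra).
  unfold R in *. lra.
Qed.

Lemma fixed_point_is_argmin x : T x = x -> is_argmin_sum f g x.
Proof.
  intro Hfix. assert (HP := fb_op_prox_point x). fold T in HP. rewrite Hfix in HP.
  pose proof HP as [[rx Hrx] _].
  split; [exists rx; exact Hrx|].
  intro y. rewrite Hrx. simpl. destruct (g y) as [r|] eqn:Hr; simpl; [|exact I].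
  destruct (prox_point_variational_ineq omega g g_hypo gamma _ x (proj1 gamma_range) HP y r Hr)
    as [rx' [Hrx' Hopt]].
  rewrite Hrx in Hrx'. injection Hrx' as <-.
  assert (Hsc := strongly_convex_gradient_ineq f gradf f_grad mu ltac:(lra) f_sc x y).
  assert (E : / gamma * hinner (hsub x (hsub x (hscal gamma (gradf x)))) (hsub y x)
              = hinner (gradf x) (hsub y x)).
  { assert (E' : hsub x (hsub x (hscal gamma (gradf x))) = hscal gamma (gradf x))
      by (apply hilbert_ext; intro w; hinner_expand; ring).
    rewrite E', hinner_scal_l. field. lra. }
  rewrite E in Hopt.
  assert (Hdd := hinner_pos _ (hsub y x)).
  assert ((mu - omega) / 2 * hinner (hsub y x) (hsub y x) >= 0) by (apply Rle_ge, Rmult_le_pos; lra).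
  lra.
Qed.

(* [x] minimizes the prox objective at [x - gamma grad f x] because the
   variational inequality of [x] for [f + g] leaves a surplus
   [(1/gamma - omega)/2 |y - x|^2 >= 0]. *)
Lemma argmin_is_fixed_point x : is_argmin_sum f g x -> T x = x.
Proof.
  intro Ha. assert (Hom := gamma_omega_lt1). symmetry.
  apply (prox_point_unique omega g g_hypo gamma (hsub x (hscal gamma (gradf x))));
    [lra| exact Hom| |apply fb_op_prox_point].
  pose proof Ha as [[rx Hrx] _].
  split; [exists rx; exact Hrx|].
  intro y. rewrite Hrx. destruct (g y) as [r|] eqn:Hr; cbn [eplus ele]; [|exact I].
  destruct (argmin_sum_variational_ineq omega g g_hypo f x (gradf x) beta Ha) with (y := y) (r := r)
    as [rx' [Hrx' Hv]]; [|exact Hr|].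
  { intros z t Ht. assert (H := descent_lemma f gradf f_grad beta ltac:(lra) gradf_lip x
                                  (hadd x (hscal t (hsub z x)))).
    rewrite hadd_sub_l in H. hinner_expand_in H. hinner_expand. lra. }
  rewrite Hrx in Hrx'. injection Hrx' as <-.
  rewrite !hnorm_sq. hinner_expand. hinner_expand_in Hv.
  assert (Hdd := hinner_pos _ (hsub y x)). hinner_expand_in Hdd.
  rewrite ?(hinner_sym X y x), ?(hinner_sym X x (gradf x)), ?(hinner_sym X y (gradf x)) in *.
  assert (Hgi : omega * gamma <= 1) by lra.
  set (Q := hinner y y - hinner x y - (hinner x y - hinner x x)) in *.
  assert (Hsur : 0 <= (/ (2 * gamma) - omega / 2) * Q).
  { apply Rmult_le_pos; [|lra].
    assert (/ (2 * gamma) - omega / 2 = (1 - omega * gamma) / (2 * gamma)) by (field; lra).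
    rewrite H. apply Rmult_le_pos; [lra| left; apply Rinv_0_lt_compat; lra]. }
  match goal with |- ?L <= ?R =>
    assert (E : R - L = r - rx + (hinner (gradf x) y - hinner (gradf x) x) + / (2 * gamma) * Q)
      by (unfold Q; field; lra) end.
  unfold Q in *. lra.
Qed.

Lemma fb_op_fixed_iff x : T x = x <-> is_argmin_sum f g x.
Proof. split; [apply fixed_point_is_argmin| apply argmin_is_fixed_point]. Qed.

Lemma fb_contraction_rate_lt1 : mu > omega ->
  0 <= (1 - gamma * mu) / (1 - gamma * omega) < 1.
Proof.
  intro Hmu. assert (Hgm := gamma_mu_lt1). assert (Hgo : gamma * omega < gamma * mu) by nra.
  split.
  - apply Rmult_le_pos; [lra| left; apply Rinv_0_lt_compat; lra].
  - apply Rmult_lt_reg_r with (1 - gamma * omega); [lra|].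
    unfold Rdiv. rewrite Rmult_assoc, Rinv_l, Rmult_1_r by lra. lra.
Qed.

Lemma fb_averaged_constant_pos : 0 < 1 - gamma * beta / (2 * (1 - gamma * mu)).
Proof.
  assert (Hsm := step_size_small). assert (Hgm := gamma_mu_lt1).
  assert (gamma * beta / (2 * (1 - gamma * mu)) < 1).
  { apply Rmult_lt_reg_r with (2 * (1 - gamma * mu)); [lra|].
    unfold Rdiv; rewrite Rmult_assoc, Rinv_l by lra. lra. }
  lra.
Qed.

End ForwardBackward.

(** * Weak convergence of the iterates of an averaged operator *)

(* [a] lies in every closed half-space containing [{z k | N <= k}], i.e. in the
   closed convex hull of this tail.  A point in all these hulls plays the role
   of a weak cluster point of [z]. *)
Definition in_tail_hull {X : Hilbert} (z : nat -> X) (N : nat) (a : X) : Prop :=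
  forall v c, (forall k, (N <= k)%nat -> hinner (z k) v <= c) -> hinner a v <= c.

Section TailHulls.
Context {X : Hilbert}.
Variable z : nat -> X.

Lemma in_tail_hull_mono n m a : (n <= m)%nat -> in_tail_hull z m a -> in_tail_hull z n a.
Proof. intros Hnm H v c Hc. apply H. intros k Hk. apply Hc. lia. Qed.

Lemma in_tail_hull_self N : in_tail_hull z N (z N).
Proof. intros v c Hc. apply Hc. lia. Qed.

Lemma in_tail_hull_midpoint N a b : in_tail_hull z N a -> in_tail_hull z N b ->
  in_tail_hull z N (hscal (1/2) (hadd a b)).
Proof.
  intros Ha Hb v c Hc. specialize (Ha v c Hc). specialize (Hb v c Hc).
  rewrite hinner_scal_l, hinner_add_l. lra.
Qed.

Lemma in_tail_hull_closed N (aj : nat -> X) a :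
  (forall j, in_tail_hull z N (aj j)) -> hlim aj a -> in_tail_hull z N a.
Proof.
  intros Hj Hc v c Hv.
  apply le_of_le_add_eps with (K := hnorm v). intros e He.
  destruct (Hc e (proj1 He)) as [j Hje].
  specialize (Hj j v c Hv).
  assert (H := cauchy_schwarz (hsub (aj j) a) v). apply Rabs_le_inv in H.
  rewrite hinner_sub_l in H. specialize (Hje j (Nat.le_refl j)).
  assert (Hv0 := hnorm_ge0 v).
  assert (hnorm (hsub (aj j) a) * hnorm v <= e * hnorm v) by (apply Rmult_le_compat_r; lra).
  lra.
Qed.

Lemma tail_hull_inf_norm N : exists m, (forall a, in_tail_hull z N a -> m <= hinner a a) /\
  (forall m', m < m' -> exists a, in_tail_hull z N a /\ hinner a a < m').
Proof.
  destruct (inf_exists (fun v => exists a, in_tail_hull z N a /\ v = hinner a a) 0) as [m [H1 H2]].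
  - exists (hinner (z N) (z N)), (z N). split; [apply in_tail_hull_self| reflexivity].
  - intros v [a [_ ->]]. apply hinner_pos.
  - exists m. split.
    + intros a Ha. apply H1. exists a. auto.
    + intros m' Hm'. destruct (H2 m' Hm') as [v [[a [Ha ->]] Hv]]. exists a. auto.
Qed.

Lemma bounded_tail_hull_point M : (forall k, hinner (z k) (z k) <= M) ->
  exists a, forall N, in_tail_hull z N a.
Proof.
  intro HM.
  set (dP := fun N m => (forall a, in_tail_hull z N a -> m <= hinner a a) /\
                (forall m', m < m' -> exists a, in_tail_hull z N a /\ hinner a a < m')).
  set (d := fun N => epsilon (inhabits 0) (dP N)).
  assert (Hd : forall N, dP N (d N)) by (intro N; apply epsilon_spec, tail_hull_inf_norm).
  assert (Hdmono : forall n m, (n <= m)%nat -> d n <= d m).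
  { intros n m Hnm. apply Rnot_lt_le. intro Hlt.
    destruct (proj2 (Hd m) (d n) Hlt) as [a [Ha Haa]].
    assert (H := proj1 (Hd n) a (in_tail_hull_mono n m a Hnm Ha)). lra. }
  destruct (growing_cv d) as [D HD].
  { intro n. apply Hdmono. lia. }
  { exists M. intros r [N ->]. eapply Rle_trans; [apply (proj1 (Hd N)), in_tail_hull_self| apply HM]. }
  assert (HdD : forall N, d N <= D) by (apply growing_ineq; [intro n; apply Hdmono; lia| exact HD]).
  set (aP := fun N a => in_tail_hull z N a /\ hinner a a < d N + / (INR N + 1)).
  set (aa := fun N => epsilon (inhabits hzero) (aP N)).
  assert (Haa : forall N, aP N (aa N)).
  { intro N. apply epsilon_spec, (proj2 (Hd N)). assert (H := inv_succ_pos N). lra. }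
  destruct (hlim_of_sq_dist_le aa (fun n => 2 * (D - d n) + 4 * / (INR n + 1))) as [a Ha].
  - intros eps Heps.
    destruct (HD (eps / 4) ltac:(lra)) as [N1 HN1].
    destruct (exists_inv_succ_lt (eps / 8) ltac:(lra)) as [N2 HN2].
    exists (Nat.max N1 N2). intros n Hn.
    specialize (HN1 n ltac:(lia)). unfold R_dist in HN1. apply Rabs_def2 in HN1.
    assert (H2 := inv_succ_le n N2 ltac:(lia)). lra.
  - intros n m Hnm. destruct (Haa n) as [Kn Hn]. destruct (Haa m) as [Km Hm].
    assert (Hmid := proj1 (Hd n) _
                      (in_tail_hull_midpoint n _ _ Kn (in_tail_hull_mono n m _ Hnm Km))).
    assert (Hi := inv_succ_le m n Hnm). assert (Hdm := HdD m).
    hinner_expand_in Hmid. hinner_expand. rewrite ?(hinner_sym X (aa m) (aa n)) in Hmid |- *.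
    lra.
  - exists a. intro N.
    apply in_tail_hull_closed with (aj := fun j => aa (N + j)%nat).
    + intro j. apply in_tail_hull_mono with (N + j)%nat; [lia| apply (proj1 (Haa _))].
    + intros e He. destruct (Ha e He) as [N0 HN0]. exists N0.
      intros n Hn. apply HN0. lia.
Qed.

End TailHulls.

Lemma tail_hull_inner_limit {X : Hilbert} (xs : nat -> X) (phi : nat -> nat) v L a :
  (forall k, (k <= phi k)%nat) -> Un_cv (fun n => hinner (xs n) v) L ->
  (forall N, in_tail_hull (fun k => xs (phi k)) N a) -> hinner a v = L.
Proof.
  intros Hphi HL Ha.
  assert (Hbound : forall s, s = 1 \/ s = -1 -> hinner a (hscal s v) <= s * L).
  { intros s Hs. apply le_of_le_add_eps with (K := 1). intros e He.
    destruct (HL e (proj1 He)) as [N HN].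
    apply (Ha N). intros k Hk. specialize (HN (phi k) ltac:(specialize (Hphi k); lia)).
    unfold R_dist in HN. apply Rabs_def2 in HN. rewrite hinner_scal_r.
    destruct Hs as [-> | ->]; lra. }
  assert (H1 := Hbound 1 (or_introl eq_refl)). assert (H2 := Hbound (-1) (or_intror eq_refl)).
  rewrite hinner_scal_r in H1, H2. lra.
Qed.

Lemma not_Un_cv_separated (s : nat -> R) l : ~ Un_cv s l ->
  exists eps sg, 0 < eps /\ (sg = 1 \/ sg = -1) /\
    forall N, exists n, (N <= n)%nat /\ sg * l + eps <= sg * s n.
Proof.
  intro Hncv.
  assert (Hex : exists eps, 0 < eps /\ forall N, exists n, (N <= n)%nat /\ eps <= Rabs (s n - l)).
  { apply NNPP. intro Hn. apply Hncv. intros eps Heps. apply NNPP. intro Hn2.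
    apply Hn. exists eps. split; [exact Heps|].
    intro N. apply NNPP. intro Hn3. apply Hn2. exists N. intros n Hn4. unfold R_dist.
    apply Rnot_le_lt. intro Hle. apply Hn3. exists n. auto. }
  destruct Hex as [eps [Heps Hinf]]. exists eps.
  destruct (classic (forall N, exists n, (N <= n)%nat /\ 1 * l + eps <= 1 * s n)) as [Hc|Hc].
  - exists 1. auto.
  - exists (-1). split; [exact Heps|]. split; [right; reflexivity|].
    apply not_all_ex_not in Hc. destruct Hc as [N0 HN0].
    intro N. destruct (Hinf (Nat.max N N0)) as [n [Hn Habs]]. exists n. split; [lia|].
    destruct (Rle_dec (1 * l + eps) (1 * s n)) as [Hle|Hle].
    + exfalso. apply HN0. exists n. split; [lia| exact Hle].
    + unfold Rabs in Habs. destruct (Rcase_abs (s n - l)); lra.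
Qed.

Lemma averaged_nonexpansive {X : Hilbert} kappa (T : X -> X) : 0 <= kappa -> averaged kappa T ->
  forall x y, hinner (hsub (T x) (T y)) (hsub (T x) (T y)) <= hinner (hsub x y) (hsub x y).
Proof.
  intros Hk Hav x y. assert (H := Hav x y).
  assert (H2 := hinner_pos _ (hsub (hsub x y) (hsub (T x) (T y)))). nra.
Qed.

(* Expand [|z - T a|^2] around [a] and around [T z]. *)
Lemma nonexpansive_residual_ineq {X : Hilbert} (T : X -> X) z a :
  hinner (hsub (T z) (T a)) (hsub (T z) (T a)) <= hinner (hsub z a) (hsub z a) ->
  2 * hinner (hsub z a) (hsub a (T a)) + hinner (hsub a (T a)) (hsub a (T a)) <=
  hinner (hsub z (T z)) (hsub z (T z)) + 2 * hnorm (hsub z (T z)) * hnorm (hsub (T z) (T a)).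
Proof.
  intro Hne.
  assert (I1 := hinner_sub_split z (T z) (T a)). assert (I2 := hinner_sub_split z a (T a)).
  assert (C := hinner_le_hnorm (hsub z (T z)) (hsub (T z) (T a))).
  lra.
Qed.

Section KrasnoselskiiMann.
Context {X : Hilbert}.
Variables (T : X -> X) (kappa : R) (x0 p0 : X).
Hypotheses (kappa_pos : 0 < kappa) (T_avg : averaged kappa T) (p0_fixed : T p0 = p0).

Let xs n := Nat.iter n T x0.
Let r n := hinner (hsub (xs n) (xs (S n))) (hsub (xs n) (xs (S n))).
Let M := 2 * hinner (hsub x0 p0) (hsub x0 p0) + 2 * hinner p0 p0.

Lemma fejer_step p n : T p = p ->
  kappa * r n <= hinner (hsub (xs n) p) (hsub (xs n) p) - hinner (hsub (xs (S n)) p) (hsub (xs (S n)) p).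
Proof.
  intro Hp. assert (H := T_avg (xs n) p). rewrite Hp in H.
  assert (E : hsub (hsub (xs n) p) (hsub (T (xs n)) p) = hsub (xs n) (T (xs n)))
    by (apply hilbert_ext; intro w; hinner_expand; ring).
  rewrite E in H. exact H.
Qed.

Lemma fejer_dist_decreasing p n : T p = p ->
  hinner (hsub (xs (S n)) p) (hsub (xs (S n)) p) <= hinner (hsub (xs n) p) (hsub (xs n) p).
Proof.
  intro Hp. assert (H := fejer_step p n Hp).
  assert (0 <= kappa * r n) by (apply Rmult_le_pos; [lra| apply hinner_pos]). lra.
Qed.

Lemma fejer_bounded n : hinner (xs n) (xs n) <= M.
Proof.
  assert (Hdist : hinner (hsub (xs n) p0) (hsub (xs n) p0) <= hinner (hsub x0 p0) (hsub x0 p0)).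
  { induction n as [|n IH]; [right; reflexivity|].
    eapply Rle_trans; [apply fejer_dist_decreasing, p0_fixed| exact IH]. }
  assert (H := hinner_sub_le (hsub (xs n) p0) (hopp p0)).
  assert (E : hsub (hsub (xs n) p0) (hopp p0) = xs n)
    by (apply hilbert_ext; intro w; hinner_expand; ring).
  rewrite E, hinner_opp_l, hinner_opp_r in H. unfold M. lra.
Qed.

Lemma iterate_image_dist_le a n : hnorm (hsub (T (xs n)) (T a)) <= 1 + (2 * M + 2 * hinner a a).
Proof.
  apply Rle_trans with (hnorm (hsub (xs n) a)).
  - apply sqrt_le_1_alt, averaged_nonexpansive with kappa; [lra| exact T_avg].
  - eapply Rle_trans; [apply hnorm_le_1_add_sq|].
    assert (H := hinner_sub_le (xs n) a). assert (H2 := fejer_bounded n). lra.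
Qed.

(* [r] is nonincreasing and [kappa (n + 1) r n] is bounded by the telescoped
   Fejer inequalities. *)
Lemma asymptotically_regular eta : 0 < eta -> exists N, forall n, (N <= n)%nat -> r n <= eta.
Proof.
  intro Heta.
  assert (Hne := averaged_nonexpansive kappa T (Rlt_le _ _ kappa_pos) T_avg).
  assert (Hrdec : forall n, r (S n) <= r n).
  { intro n. unfold r. rewrite hinner_sub_sym, (hinner_sub_sym (xs n)). apply Hne. }
  set (C := hinner (hsub x0 p0) (hsub x0 p0)).
  assert (Hinv : forall n, hinner (hsub (xs (S n)) p0) (hsub (xs (S n)) p0)
                           + kappa * (INR n + 1) * r n <= C).
  { induction n as [|n IH].
    - assert (H := fejer_step p0 0 p0_fixed). change (xs 0%nat) with x0 in H. simpl INR. unfold C. lra.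
    - assert (H := fejer_step p0 (S n) p0_fixed). rewrite S_INR.
      assert (kappa * (INR n + 1) * r (S n) <= kappa * (INR n + 1) * r n).
      { apply Rmult_le_compat_l; [assert (0 <= INR n) by apply pos_INR; nra| apply Hrdec]. }
      lra. }
  assert (HC : 0 <= C) by apply hinner_pos.
  assert (He : 0 < eta * kappa / (C + 1)) by (apply Rdiv_lt_0_compat; [apply Rmult_lt_0_compat|]; lra).
  destruct (exists_inv_succ_lt _ He) as [N HN].
  exists N. intros n Hn. assert (H := Hinv n). assert (Hi := inv_succ_le n N Hn).
  assert (Hpos := hinner_pos _ (hsub (xs (S n)) p0)).
  assert (HnP : 0 < INR n + 1) by (assert (0 <= INR n) by apply pos_INR; lra).
  assert (Hr0 : 0 <= r n) by apply hinner_pos.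
  assert (H1 : r n * (kappa * (INR n + 1)) <= C) by lra.
  apply Rle_trans with ((C + 1) / kappa * / (INR n + 1)).
  { apply Rmult_le_reg_r with (kappa * (INR n + 1)); [nra|].
    replace ((C + 1) / kappa * / (INR n + 1) * (kappa * (INR n + 1))) with (C + 1) by (field; lra).
    lra. }
  apply Rle_trans with ((C + 1) / kappa * (eta * kappa / (C + 1))).
  { apply Rmult_le_compat_l; [apply Rlt_le, Rdiv_lt_0_compat|]; lra. }
  right. field. lra.
Qed.

Lemma fejer_inner_cv p q : T p = p -> T q = q ->
  exists L, Un_cv (fun n => hinner (xs n) (hsub p q)) L.
Proof.
  intros Hp Hq.
  assert (Hsq : forall p, T p = p -> exists L, Un_cv (fun n => hinner (hsub (xs n) p) (hsub (xs n) p)) L).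
  { intros p' Hp'. destruct (decreasing_cv (fun n => hinner (hsub (xs n) p') (hsub (xs n) p'))) as [L HL].
    - intro n. apply fejer_dist_decreasing, Hp'.
    - exists 0. intros v [n ->]. unfold opp_seq. assert (H := hinner_pos _ (hsub (xs n) p')). lra.
    - exists L. exact HL. }
  destruct (Hsq p Hp) as [Lp HLp]. destruct (Hsq q Hq) as [Lq HLq].
  exists ((Lq - Lp + (hinner p p - hinner q q)) / 2).
  intros e He. destruct (HLp e He) as [N1 H1]. destruct (HLq e He) as [N2 H2].
  exists (Nat.max N1 N2). intros n Hn.
  specialize (H1 n ltac:(lia)). specialize (H2 n ltac:(lia)).
  unfold R_dist in *. apply Rabs_def2 in H1. apply Rabs_def2 in H2.
  replace (hinner (xs n) (hsub p q)) with
    ((hinner (hsub (xs n) q) (hsub (xs n) q) - hinner (hsub (xs n) p) (hsub (xs n) p)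
      + (hinner p p - hinner q q)) / 2)
    by (hinner_expand; rewrite (hinner_sym X q (xs n)), (hinner_sym X p (xs n)); field).
  apply Rabs_def1; lra.
Qed.

(* Demiclosedness of [Id - T] at [0]: by [nonexpansive_residual_ineq], the tail
   of [xs o phi] lies in the half-space [<., v> <= <a, v> - |v|^2/2 + eta],
   [v = a - T a], as soon as the residuals are small enough. *)
Lemma tail_hull_point_fixed (phi : nat -> nat) a : (forall k, (k <= phi k)%nat) ->
  (forall N, in_tail_hull (fun k => xs (phi k)) N a) -> T a = a.
Proof.
  intros Hphi Ha.
  assert (Hne := averaged_nonexpansive kappa T (Rlt_le _ _ kappa_pos) T_avg).
  set (v := hsub a (T a)).
  set (B := 1 + (2 * M + 2 * hinner a a)).
  assert (HB1 : 1 <= B).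
  { assert (H1 := hinner_pos _ a). assert (H2 := hinner_pos _ (hsub x0 p0)).
    assert (H3 := hinner_pos _ p0). unfold B, M. lra. }
  assert (Hvv : hinner v v <= 0).
  { apply le_of_le_add_eps with (K := 2). intros eta Heta.
    set (m := Rmin 1 (eta / (1 + 2 * B))).
    assert (Hm0 : 0 < m) by (apply Rmin_glb_lt; [lra| apply Rdiv_lt_0_compat; lra]).
    assert (Hm1 : m <= 1) by apply Rmin_l.
    assert (Hm2 : m * (1 + 2 * B) <= eta).
    { apply Rle_trans with (eta / (1 + 2 * B) * (1 + 2 * B)).
      - apply Rmult_le_compat_r; [lra| apply Rmin_r].
      - right. field. lra. }
    destruct (asymptotically_regular (m ^ 2) ltac:(apply pow_lt; lra)) as [N HN].
    enough (hinner a v <= hinner a v - hinner v v / 2 + eta) by lra.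
    apply (Ha N). intros k Hk.
    set (z := xs (phi k)).
    assert (Hr := HN (phi k) ltac:(specialize (Hphi k); lia)). unfold r in Hr. fold z in Hr.
    change (xs (S (phi k))) with (T z) in Hr.
    assert (He : hnorm (hsub z (T z)) <= m) by (apply hnorm_le_of_sq; lra).
    assert (He0 := hnorm_ge0 (hsub z (T z))).
    assert (Hsq := hnorm_sq (hsub z (T z))).
    assert (Hres := nonexpansive_residual_ineq T z a (Hne z a)). fold v in Hres.
    assert (HTB := iterate_image_dist_le a (phi k)). fold B z in HTB.
    assert (Hpos := hnorm_ge0 (hsub (T z) (T a))).
    assert (hnorm (hsub z (T z)) * hnorm (hsub (T z) (T a)) <= m * B) by (apply Rmult_le_compat; lra).
    assert (hnorm (hsub z (T z)) ^ 2 <= m) by nra.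
    rewrite hinner_sub_l in Hres. lra. }
  apply sym_eq, hinner_sub_self_eq0. assert (H := hinner_pos _ v). fold v. lra.
Qed.

Lemma tail_hull_points_eq (phi0 phi1 : nat -> nat) a0 a1 :
  (forall k, (k <= phi0 k)%nat) -> (forall k, (k <= phi1 k)%nat) ->
  (forall N, in_tail_hull (fun k => xs (phi0 k)) N a0) ->
  (forall N, in_tail_hull (fun k => xs (phi1 k)) N a1) -> a0 = a1.
Proof.
  intros H0 H1 Ha0 Ha1.
  destruct (fejer_inner_cv a0 a1 (tail_hull_point_fixed phi0 a0 H0 Ha0)
              (tail_hull_point_fixed phi1 a1 H1 Ha1)) as [L HL].
  assert (E0 := tail_hull_inner_limit xs phi0 (hsub a0 a1) L a0 H0 HL Ha0).
  assert (E1 := tail_hull_inner_limit xs phi1 (hsub a0 a1) L a1 H1 HL Ha1).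
  apply hinner_sub_self_eq0. rewrite hinner_sub_l. lra.
Qed.

(* The weak limit is the unique point in all tail hulls: a separated
   subsequence would have another such point. *)
Lemma averaged_iterates_weak_cv : exists xbar, T xbar = xbar /\ weak_cv xs xbar.
Proof.
  destruct (bounded_tail_hull_point xs M fejer_bounded) as [a0 Ha0].
  exists a0. split; [exact (tail_hull_point_fixed (fun k => k) a0 (fun k => le_n k) Ha0)|].
  intro y. apply NNPP. intro Hncv.
  destruct (not_Un_cv_separated _ _ Hncv) as [eps [sg [Heps [Hsg Hinf]]]].
  set (w := hscal sg y).
  set (P := fun k n => (k <= n)%nat /\ hinner a0 w + eps <= hinner (xs n) w).
  assert (HP : forall k, exists n, P k n).
  { intro k. destruct (Hinf k) as [n [Hn Hs]]. exists n. unfold P, w.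
    rewrite !hinner_scal_r. auto. }
  set (phi := fun k => epsilon (inhabits 0%nat) (P k)).
  assert (Hphi : forall k, P k (phi k)) by (intro k; apply epsilon_spec, HP).
  destruct (bounded_tail_hull_point (fun k => xs (phi k)) M (fun k => fejer_bounded (phi k)))
    as [a1 Ha1].
  assert (Hw1 : hinner a0 w + eps <= hinner a1 w).
  { assert (H : hinner a1 (hopp w) <= - (hinner a0 w + eps)).
    { apply (Ha1 0%nat). intros k _. rewrite hinner_opp_r. assert (H := proj2 (Hphi k)). lra. }
    rewrite hinner_opp_r in H. lra. }
  rewrite (tail_hull_points_eq (fun k => k) phi a0 a1 (fun k => le_n k) (fun k => proj1 (Hphi k))
             Ha0 Ha1) in Hw1.
  lra.
Qed.

End KrasnoselskiiMann.

(** * Contractions *)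

Section Contractions.
Context {X : Hilbert}.
Variables (T : X -> X) (delta : R).
Hypotheses (delta_ge0 : 0 <= delta) (delta_lt1 : delta < 1)
  (T_contr : forall x y, hnorm (hsub (T x) (T y)) <= delta * hnorm (hsub x y)).

Lemma contraction_fixed_point_unique z z' : T z = z -> T z' = z' -> z' = z.
Proof.
  intros Tz Tz'. assert (H := T_contr z' z). rewrite Tz, Tz' in H.
  assert (Hn := hnorm_ge0 (hsub z' z)).
  assert (H0 : hnorm (hsub z' z) = 0) by nra.
  apply hinner_sub_self_eq0. rewrite <- hnorm_sq, H0. ring.
Qed.

Lemma contraction_iter_dist x0 z : T z = z -> forall n,
  hnorm (hsub (Nat.iter n T x0) z) <= delta ^ n * hnorm (hsub x0 z).
Proof.
  intros Tz n. induction n as [|n IH]; [simpl; lra|].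
  change (Nat.iter (S n) T x0) with (T (Nat.iter n T x0)).
  assert (H := T_contr (Nat.iter n T x0) z). rewrite Tz in H.
  simpl. assert (delta * hnorm (hsub (Nat.iter n T x0) z) <= delta * (delta ^ n * hnorm (hsub x0 z)))
    by (apply Rmult_le_compat_l; lra).
  lra.
Qed.

Lemma contraction_iter_strong_cv x0 z : T z = z -> strong_cv (fun n => Nat.iter n T x0) z.
Proof.
  intros Tz e He.
  assert (Hn0 := hnorm_ge0 (hsub x0 z)).
  destruct (pow_lt_1_zero delta ltac:(rewrite Rabs_pos_eq; lra) (e / (hnorm (hsub x0 z) + 1))
              ltac:(apply Rdiv_lt_0_compat; lra)) as [N HN].
  exists N. intros n Hn. specialize (HN n Hn). rewrite Rabs_pos_eq in HN by (apply pow_le; lra).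
  unfold R_dist. rewrite Rminus_0_r, Rabs_pos_eq by apply hnorm_ge0.
  eapply Rle_lt_trans; [apply contraction_iter_dist, Tz|].
  apply Rle_lt_trans with (e / (hnorm (hsub x0 z) + 1) * hnorm (hsub x0 z)).
  - apply Rmult_le_compat_r; lra.
  - replace (e / (hnorm (hsub x0 z) + 1) * hnorm (hsub x0 z))
      with (e * (hnorm (hsub x0 z) / (hnorm (hsub x0 z) + 1))) by (field; lra).
    apply lt_mul_div_succ; assumption.
Qed.

End Contractions.

Lemma strong_cv_weak_cv {X : Hilbert} (u : nat -> X) l : strong_cv u l -> weak_cv u l.
Proof.
  intros Hs y e He.
  assert (Hy := hnorm_ge0 y).
  destruct (Hs (e / (hnorm y + 1)) ltac:(apply Rdiv_lt_0_compat; lra)) as [N HN].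
  exists N. intros n Hn. specialize (HN n Hn). unfold R_dist in *.
  rewrite Rminus_0_r, Rabs_pos_eq in HN by apply hnorm_ge0.
  rewrite <- hinner_sub_l. eapply Rle_lt_trans; [apply cauchy_schwarz|].
  apply Rle_lt_trans with (e / (hnorm y + 1) * hnorm y).
  - apply Rmult_le_compat_r; lra.
  - replace (e / (hnorm y + 1) * hnorm y) with (e * (hnorm y / (hnorm y + 1))) by (field; lra).
    apply lt_mul_div_succ; assumption.
Qed.

Theorem mainTheorem16 (X : Hilbert) (mu omega beta : R)
  (f : X -> R) (gradf : X -> X) (g : X -> ERext) (gamma : R) (x0 : X) :
  mu >= omega -> omega >= 0 -> beta > 0 ->
  strongly_convex mu f ->
  is_frechet_gradient f gradf ->
  lipschitz beta gradf ->
  proper_fun g -> lsc g -> hypoconvex omega g ->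
  (exists z, is_argmin_sum f g z) ->
  0 < gamma < 2 / (beta + 2 * mu) ->
  let delta := (1 - gamma * mu) / (1 - gamma * omega) in
  let T := fb_op gamma g gradf in
  (forall x, T x = x <-> is_argmin_sum f g x) /\
  exists xbar, is_argmin_sum f g xbar /\
    weak_cv (fun n => Nat.iter n T x0) xbar /\
    (mu > omega ->
       (forall z, is_argmin_sum f g z <-> z = xbar) /\
       strong_cv (fun n => Nat.iter n T x0) xbar /\
       delta < 1 /\
       forall n, hnorm (hsub (Nat.iter n T x0) xbar) <= delta ^ n * hnorm (hsub x0 xbar)).
Proof.
  intros Hmu Hom Hb Hs Hfr Hl Hp Hlsc Hh [z Hz] Hgam delta T.
  assert (Hfix : forall x, T x = x <-> is_argmin_sum f g x)
    by (intro x; apply (fb_op_fixed_iff mu omega beta gamma f gradf g); assumption).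
  split; [exact Hfix|].
  assert (Tz : T z = z) by (apply Hfix, Hz).
  destruct (Rgt_dec mu omega) as [Hgt|Hngt].
  - destruct (fb_contraction_rate_lt1 mu omega beta gamma Hmu Hom Hb Hgam Hgt) as [Hd0 Hd1].
    assert (Hc : forall x y, hnorm (hsub (T x) (T y)) <= delta * hnorm (hsub x y))
      by (intros; apply (fb_op_contraction mu omega beta gamma f gradf g); assumption).
    assert (Hcv := contraction_iter_strong_cv T delta Hd0 Hd1 Hc x0 z Tz).
    exists z. split; [exact Hz|]. split; [apply strong_cv_weak_cv, Hcv|].
    intros _. split; [|split; [exact Hcv| split; [exact Hd1| apply contraction_iter_dist; assumption]]].
    intro z'. split; [|intros ->; exact Hz].
    intro Hz'. apply (contraction_fixed_point_unique T delta Hd1 Hc); [exact Tz| apply Hfix, Hz'].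
  - assert (Havg : averaged (1 - gamma * beta / (2 * (1 - gamma * mu))) T)
      by (apply (fb_op_averaged mu omega beta gamma f gradf g); assumption || lra).
    assert (Hk := fb_averaged_constant_pos mu omega beta gamma Hmu Hom Hb Hgam).
    destruct (averaged_iterates_weak_cv T _ x0 z Hk Havg Tz) as [xbar [Tx Hw]].
    exists xbar. split; [apply Hfix, Tx|]. split; [exact Hw| lra].
Qed.
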